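(* Let $V$ be a filled sparsity pattern, $X\in\mathbb S^n_V$ positive definite and $Y\in\mathbb S^n_V$. For $t$ in a neighborhood of $0$ let $X+tY=L(t)D(t)L(t)^T$ be the factorization with $L(t)$ unit lower triangular and $D(t)$ positive diagonal, and for each vertex $i$ let $U_i(t)=-\sum_{k\in T_i}D_{kk}(t)L_{I_ik}(t)L_{I_ik}(t)^T$. Write $L=L(0)$, $D=D(0)$ and $L',D',U_i'$ for the derivatives at $t=0$. Then for every $j$, $$\begin{bmatrix}Y_{jj}&Y_{I_j j}^T\\ Y_{I_j j}&0\end{bmatrix}+\sum_{i\in\mathrm{ch}(j)}E_{I_j^+I_i}U_i'E_{I_j^+I_i}^T=\begin{bmatrix}1&0\\ L_{I_j j}&I\end{bmatrix}\begin{bmatrix}D_{jj}'&D_{jj}(L'_{I_j j})^T\\ D_{jj}L'_{I_j j}&U_j'\end{bmatrix}\begin{bmatrix}1&L_{I_j j}^T\\0&I\end{bmatrix}.$$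
   Context: A symmetric sparsity pattern $V$ is a set of pairs $(i,j)$ with $1\le j\le i\le n$ containing all $(i,i)$; it is filled (chordal) if $i>j>k$, $(i,k)\in V$, $(j,k)\in V$ imply $(i,j)\in V$. $\mathbb S^n_V$ is the set of real symmetric $n\times n$ matrices with $X_{ij}=X_{ji}=0$ whenever $i\ge j$ and $(i,j)\notin V$. For each $j$, $I_j=\{i>j:(i,j)\in V\}$, $I_j^+=\{j\}\cup I_j$. Elimination tree: the parent of $j$ is $\min I_j$ if $I_j\neq\emptyset$; $\mathrm{ch}(j)$ is the set of children of $j$ and $T_i$ the set consisting of $i$ and its descendants. It is known that $I_i\subseteq I_j^+$ for $i\in\mathrm{ch}(j)$ and that the Cholesky factor of a positive definite matrix in $\mathbb S^n_V$ has no nonzeros outside $V$. Index sets are sorted increasingly, $I(a)$ being the $a$-th element; for $J\subseteq I$, $E_{IJ}$ is the $|I|\times|J|$ matrix with $(E_{IJ})_{ab}=1$ iff $I(a)=J(b)$, else $0$. $A_{IJ}$ is the submatrix with rows $I$ and columns $J$; $A_{Ij}$ the part of column $j$ with rows in $I$. *)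

(* Conventions: vertices / matrix indices are 0-based, 0 <= i < n.
   Matrices are functions nat -> nat -> R; only entries with indices in
   range are ever constrained or used. *)
From Stdlib Require Import Reals List Arith Bool.
Import ListNotations.
Open Scope R_scope.

Definition mat := nat -> nat -> R.

Definition rsum (l : list nat) (f : nat -> R) : R :=
  fold_right (fun i acc => f i + acc) 0 l.

Definition sparsity_pattern (n : nat) (V : nat -> nat -> bool) : Prop :=
  (forall i j, V i j = true -> (j <= i < n)%nat) /\
  (forall i, (i < n)%nat -> V i i = true).

Definition filled (n : nat) (V : nat -> nat -> bool) : Prop :=
  forall i j k, (k < j)%nat -> (j < i)%nat ->
    V i k = true -> V j k = true -> V i j = true.

Definition in_SV (n : nat) (V : nat -> nat -> bool) (X : mat) : Prop :=
  (forall i j, (i < n)%nat -> (j < n)%nat -> X i j = X j i) /\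
  (forall i j, (j <= i < n)%nat -> V i j = false -> X i j = 0 /\ X j i = 0).

Definition pos_def (n : nat) (X : mat) : Prop :=
  forall x : nat -> R, (exists i, (i < n)%nat /\ x i <> 0) ->
    rsum (seq 0 n) (fun i => rsum (seq 0 n) (fun j => x i * X i j * x j)) > 0.

(* I_j = { i > j : (i,j) in V }, sorted increasingly *)
Definition Iset (n : nat) (V : nat -> nat -> bool) (j : nat) : list nat :=
  filter (fun i => V i j) (seq (S j) (n - S j)).

Definition Iplus (n : nat) (V : nat -> nat -> bool) (j : nat) : list nat :=
  j :: Iset n V j.

(* elimination tree: parent of j is min I_j (the head of the sorted list) *)
Definition parent (n : nat) (V : nat -> nat -> bool) (j : nat) : option nat :=
  match Iset n V j with [] => None | p :: _ => Some p end.

Definition is_child (n : nat) (V : nat -> nat -> bool) (j i : nat) : bool :=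
  match parent n V i with Some p => Nat.eqb p j | None => false end.

Definition children (n : nat) (V : nat -> nat -> bool) (j : nat) : list nat :=
  filter (is_child n V j) (seq 0 n).

Fixpoint anc_iter (n : nat) (V : nat -> nat -> bool) (k m : nat) : option nat :=
  match m with
  | O => Some k
  | S m' => match anc_iter n V k m' with
            | Some p => parent n V p
            | None => None
            end
  end.

(* k in T_i  iff  k = i or k is a descendant of i *)
Definition inT (n : nat) (V : nat -> nat -> bool) (i k : nat) : bool :=
  existsb (fun m => match anc_iter n V k m with
                    | Some p => Nat.eqb p i
                    | None => false end) (seq 0 (S n)).

Definition Tset (n : nat) (V : nat -> nat -> bool) (i : nat) : list nat :=
  filter (inT n V i) (seq 0 n).

(* E_{I J} for J subset of I, positions a < |I|, b < |J| *)
Definition Emat (I J : list nat) (a b : nat) : R :=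
  if Nat.eqb (nth a I 0%nat) (nth b J 0%nat) then 1 else 0.

(* U_i(t) = - sum_{k in T_i} D_kk(t) L_{I_i k}(t) L_{I_i k}(t)^T,
   an |I_i| x |I_i| matrix indexed by positions in I_i *)
Definition Umat (n : nat) (V : nat -> nat -> bool) (L D : R -> mat)
    (i : nat) (t : R) (a b : nat) : R :=
  - rsum (Tset n V i) (fun k =>
      D t k k * L t (nth a (Iset n V i) 0%nat) k * L t (nth b (Iset n V i) 0%nat) k).

(* The three block matrices of the identity, all indexed by positions
   0 .. |I_j| in I_j^+ (position 0 is j, position a+1 is I_j(a)). *)
Definition Yblock (n : nat) (V : nat -> nat -> bool) (Y : mat) (j a b : nat) : R :=
  match a, b with
  | O, O => Y j j
  | O, S b' => Y (nth b' (Iset n V j) 0%nat) j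
  | S a', O => Y (nth a' (Iset n V j) 0%nat) j
  | S _, S _ => 0
  end.

Definition Lblock (n : nat) (V : nat -> nat -> bool) (L0 : mat) (j a c : nat) : R :=
  match a, c with
  | O, O => 1
  | O, S _ => 0
  | S a', O => L0 (nth a' (Iset n V j) 0%nat) j
  | S a', S c' => if Nat.eqb a' c' then 1 else 0
  end.

Definition Mblock (n : nat) (V : nat -> nat -> bool) (D0 Dp Lp : mat)
    (Upj : nat -> nat -> R) (j c d : nat) : R :=
  match c, d with
  | O, O => Dp j j
  | O, S d' => D0 j j * Lp (nth d' (Iset n V j) 0%nat) j
  | S c', O => D0 j j * Lp (nth c' (Iset n V j) 0%nat) j
  | S c', S d' => Upj c' d'
  end.

(* The proof has two independent halves.
   - A static identity, valid for every factorization Z = L D L^T of a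
     matrix Z with the sparsity pattern V: with
     U_i = - sum_(k in T_i) D_kk L_(I_i k) L_(I_i k)^T,
        [Z_jj Z_(I_j j)^T; Z_(I_j j) 0] + sum_(i in ch(j)) E U_i E^T
          = [1; L_(I_j j)] D_jj [1; L_(I_j j)]^T + [0 0; 0 U_j].
     It rests on two facts about the elimination tree: T_j is the disjoint
     union of {j} and of the T_i for i in ch(j), and L_pk = 0 whenever
     k in T_i, i in ch(j) and p in I_j^+ \ I_i (the factor has no fill-in).
   - Differentiability at t = 0 of L(t), D(t) (by induction on the columns,
     through the recursive formulas defining the factor), hence of U_i(t).
   Differentiating the static identity at t = 0 (it holds near 0) and
   expanding the block product [1 0; L I] M [1 L^T; 0 I] gives the theorem. *)

From Stdlib Require Import Reals List Arith Bool Lia Lra.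
From Coquelicot Require Import Coquelicot.
Import ListNotations.
Open Scope R_scope.

(** * Finite sums over lists of indices *)

Lemma rsum_app l1 l2 f : rsum (l1 ++ l2) f = rsum l1 f + rsum l2 f.
Proof. induction l1 as [|x l IH]; simpl; [lra|]. unfold rsum in *; simpl; rewrite IH; lra. Qed.

Lemma rsum_ext l f g : (forall x, In x l -> f x = g x) -> rsum l f = rsum l g.
Proof.
  induction l as [|x l IH]; intros H; simpl; auto.
  unfold rsum in *; simpl. rewrite H by (left; auto). rewrite IH; auto.
  intros; apply H; right; auto.
Qed.

Lemma rsum_zero l f : (forall x, In x l -> f x = 0) -> rsum l f = 0.
Proof.
  induction l as [|x l IH]; intros H; simpl; auto.
  unfold rsum in *; simpl. rewrite H by (left; auto). rewrite IH; [lra|].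
  intros; apply H; right; auto.
Qed.

Lemma rsum_plus l f g : rsum l (fun x => f x + g x) = rsum l f + rsum l g.
Proof. induction l as [|x l IH]; simpl; [lra|]. unfold rsum in *; simpl; rewrite IH; lra. Qed.

Lemma rsum_scal l c f : rsum l (fun x => c * f x) = c * rsum l f.
Proof. induction l as [|x l IH]; simpl; [lra|]. unfold rsum in *; simpl; rewrite IH; lra. Qed.

Lemma rsum_scalr l c f : rsum l (fun x => f x * c) = rsum l f * c.
Proof. induction l as [|x l IH]; simpl; [lra|]. unfold rsum in *; simpl; rewrite IH; lra. Qed.

Lemma rsum_opp l f : rsum l (fun x => - f x) = - rsum l f.
Proof. induction l as [|x l IH]; simpl; [lra|]. unfold rsum in *; simpl; rewrite IH; lra. Qed.

Lemma rsum_filter (h : nat -> bool) l f :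
  rsum (filter h l) f = rsum l (fun x => if h x then f x else 0).
Proof.
  induction l as [|x l IH]; simpl; auto.
  destruct (h x); unfold rsum in *; simpl; rewrite IH; lra.
Qed.

Lemma rsum_swap l1 l2 (f : nat -> nat -> R) :
  rsum l1 (fun x => rsum l2 (fun y => f x y)) = rsum l2 (fun y => rsum l1 (fun x => f x y)).
Proof.
  induction l1 as [|x l IH]; simpl.
  - symmetry; apply rsum_zero; auto.
  - change (rsum l2 (fun y => f x y) + rsum l (fun x => rsum l2 (fun y => f x y)) =
            rsum l2 (fun y => f x y + rsum l (fun x => f x y))).
    rewrite rsum_plus, IH. reflexivity.
Qed.

Lemma rsum_map (h : nat -> nat) l f : rsum (map h l) f = rsum l (fun x => f (h x)).
Proof. induction l as [|x l IH]; simpl; auto. unfold rsum in *; simpl; rewrite IH; auto. Qed.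

Lemma rsum_nth l f :
  rsum (seq 0 (length l)) (fun c => f (nth c l 0%nat)) = rsum l f.
Proof.
  induction l as [|x l IH]; simpl; auto.
  change (f x + rsum (seq 1 (length l)) (fun c => f (nth c (x :: l) 0%nat)) = f x + rsum l f).
  rewrite <- seq_shift, rsum_map. simpl. rewrite IH. reflexivity.
Qed.

Lemma rsum_delta_in l p g : NoDup l -> In p l ->
  rsum l (fun x => if Nat.eqb p x then g x else 0) = g p.
Proof.
  induction l as [|x l IH]; intros Hnd Hp; [destruct Hp|]. inversion Hnd; subst.
  change ((if Nat.eqb p x then g x else 0)
          + rsum l (fun x => if Nat.eqb p x then g x else 0) = g p).
  destruct Hp as [->|Hp].
  - rewrite Nat.eqb_refl, rsum_zero; [lra|].
    intros y Hy. destruct (Nat.eqb_spec p y); subst; [contradiction|auto].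
  - destruct (Nat.eqb_spec p x); subst; [contradiction|]. rewrite IH; auto. lra.
Qed.

Lemma rsum_delta_notin l p g : ~ In p l ->
  rsum l (fun x => if Nat.eqb p x then g x else 0) = 0.
Proof.
  intros H; apply rsum_zero. intros x Hx.
  destruct (Nat.eqb_spec p x); subst; [contradiction|auto].
Qed.

Lemma Emat_sandwich (J I : list nat) (a b : nat) (W : nat -> nat -> R) :
  NoDup I ->
  (~ In (nth a J 0%nat) I \/ ~ In (nth b J 0%nat) I ->
     W (nth a J 0%nat) (nth b J 0%nat) = 0) ->
  rsum (seq 0 (length I)) (fun c => rsum (seq 0 (length I)) (fun d =>
    Emat J I a c * W (nth c I 0%nat) (nth d I 0%nat) * Emat J I b d))
  = W (nth a J 0%nat) (nth b J 0%nat).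
Proof.
  intros Hnd HW. set (p := nth a J 0%nat) in *. set (q := nth b J 0%nat) in *.
  transitivity (rsum I (fun x => if Nat.eqb p x then
     rsum I (fun y => if Nat.eqb q y then W x y else 0) else 0)).
  - rewrite <- (rsum_nth I). apply rsum_ext; intros c _. unfold Emat. fold p q.
    destruct (Nat.eqb p (nth c I 0%nat)).
    + rewrite <- (rsum_nth I). apply rsum_ext; intros d _. destruct (Nat.eqb q _); lra.
    + apply rsum_zero. intros d _. lra.
  - destruct (in_dec Nat.eq_dec p I) as [Hp|Hp].
    + rewrite rsum_delta_in by auto.
      destruct (in_dec Nat.eq_dec q I) as [Hq|Hq].
      * apply rsum_delta_in; auto.
      * rewrite rsum_delta_notin by auto. symmetry; auto.
    + rewrite rsum_delta_notin by auto. symmetry; auto.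
Qed.

(** * The elimination tree of a filled pattern *)

Section EliminationTree.
Variable n : nat.
Variable V : nat -> nat -> bool.
Hypothesis HV : sparsity_pattern n V.
Hypothesis Hfill : filled n V.

Lemma Iset_In j p : In p (Iset n V j) <-> (j < p < n)%nat /\ V p j = true.
Proof.
  unfold Iset. rewrite filter_In, in_seq. split; intros [H1 H2]; split; auto; lia.
Qed.

Lemma Iset_NoDup j : NoDup (Iset n V j).
Proof. unfold Iset. apply NoDup_filter, seq_NoDup. Qed.

Lemma nth_Iset_In j a : (a < length (Iset n V j))%nat ->
  (j < nth a (Iset n V j) 0%nat < n)%nat /\ V (nth a (Iset n V j) 0%nat) j = true.
Proof. intros Ha. apply Iset_In, nth_In, Ha. Qed.

Lemma filter_seq_head (f : nat -> bool) s l h r :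
  filter f (seq s l) = h :: r -> forall x, In x (filter f (seq s l)) -> (h <= x)%nat.
Proof.
  revert s. induction l as [|l IH]; intros s E x Hx; simpl in *; [discriminate|].
  destruct (f s) eqn:Fs.
  - inversion E; subst. destruct Hx as [<-|Hx]; auto.
    apply filter_In in Hx as [Hx _]. apply in_seq in Hx. lia.
  - rewrite E in Hx. rewrite <- E in Hx. exact (IH (S s) E x Hx).
Qed.

Lemma parent_spec k p : parent n V k = Some p ->
  In p (Iset n V k) /\ forall x, In x (Iset n V k) -> (p <= x)%nat.
Proof.
  unfold parent. destruct (Iset n V k) eqn:E; intros H; [discriminate|].
  inversion H; subst. split; [left; auto|].
  intros x Hx. unfold Iset in E. eapply filter_seq_head; [exact E|]. rewrite E. exact Hx.
Qed.

Lemma parent_lt k p : parent n V k = Some p -> (k < p < n)%nat /\ V p k = true.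
Proof. intros H. apply Iset_In, (parent_spec _ _ H). Qed.

Lemma parent_exists k p : In p (Iset n V k) -> exists q, parent n V k = Some q.
Proof. unfold parent. destruct (Iset n V k); [intros []|eauto]. Qed.

Lemma children_In j i : In i (children n V j) <-> (i < n)%nat /\ parent n V i = Some j.
Proof.
  unfold children, is_child. rewrite filter_In, in_seq.
  destruct (parent n V i) as [p|]; split; intros [H1 H2]; try discriminate.
  - apply Nat.eqb_eq in H2; subst; split; auto; lia.
  - inversion H2; subst. split; [lia|apply Nat.eqb_refl].
Qed.

Lemma children_NoDup j : NoDup (children n V j).
Proof. unfold children. apply NoDup_filter, seq_NoDup. Qed.

Lemma anc_S k m : anc_iter n V k (S m) =
  match parent n V k with Some p => anc_iter n V p m | None => None end.
Proof.
  induction m as [|m IH].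
  - simpl. destruct (parent n V k); auto.
  - change (anc_iter n V k (S (S m))) with
      (match anc_iter n V k (S m) with Some p => parent n V p | None => None end).
    rewrite IH. destruct (parent n V k); auto.
Qed.

Lemma anc_add k m d : anc_iter n V k (m + d) =
  match anc_iter n V k m with Some p => anc_iter n V p d | None => None end.
Proof.
  induction d as [|d IH].
  - rewrite Nat.add_0_r. destruct (anc_iter n V k m); auto.
  - rewrite Nat.add_succ_r. simpl. rewrite IH. destruct (anc_iter n V k m); auto.
Qed.

(* Each step up the tree increases the index. *)
Lemma anc_ge k m x : anc_iter n V k m = Some x -> (k + m <= x)%nat.
Proof.
  revert x; induction m as [|m IH]; intros x H; simpl in H.
  - inversion H; lia.
  - destruct (anc_iter n V k m) eqn:E; [|discriminate].
    apply parent_lt in H. specialize (IH _ eq_refl). lia.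
Qed.

Lemma anc_lt k m x : (k < n)%nat -> anc_iter n V k m = Some x -> (x < n)%nat.
Proof.
  intros Hk; revert x; induction m as [|m IH]; intros x H; simpl in H.
  - inversion H; lia.
  - destruct (anc_iter n V k m) eqn:E; [|discriminate]. apply parent_lt in H. lia.
Qed.

Lemma anc_inj k m1 m2 x :
  anc_iter n V k m1 = Some x -> anc_iter n V k m2 = Some x -> m1 = m2.
Proof.
  assert (Hlt : forall a b, (a < b)%nat ->
            anc_iter n V k a = Some x -> anc_iter n V k b = Some x -> False).
  { intros a b Hab Ha Hb. replace b with (a + (b - a))%nat in Hb by lia.
    rewrite anc_add, Ha in Hb. apply anc_ge in Hb. lia. }
  intros H1 H2. destruct (Nat.lt_total m1 m2) as [h|[h|h]]; eauto; exfalso; eauto.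
Qed.

Lemma inT_iff i k : (k < n)%nat ->
  (inT n V i k = true <-> exists m, anc_iter n V k m = Some i).
Proof.
  intros Hk. unfold inT. rewrite existsb_exists. split.
  - intros [m [_ H]]. exists m. destruct (anc_iter n V k m); [|discriminate].
    apply Nat.eqb_eq in H; subst; auto.
  - intros [m H]. exists m. split.
    + apply in_seq. pose proof (anc_ge _ _ _ H). pose proof (anc_lt _ _ _ Hk H). lia.
    + rewrite H. apply Nat.eqb_refl.
Qed.

Lemma inT_refl j : (j < n)%nat -> inT n V j j = true.
Proof. intros Hj. apply inT_iff; auto. exists 0%nat; reflexivity. Qed.

Lemma inT_le i k : (k < n)%nat -> inT n V i k = true -> (k <= i)%nat.
Proof. intros Hk H. apply inT_iff in H as [m Hm]; auto. apply anc_ge in Hm. lia. Qed.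

Lemma inT_parent i j k : (k < n)%nat -> parent n V i = Some j ->
  inT n V i k = true -> inT n V j k = true.
Proof.
  intros Hk Hp H. apply inT_iff in H as [m Hm]; auto. apply inT_iff; auto.
  exists (S m). simpl. rewrite Hm. exact Hp.
Qed.

Lemma inT_through_child j k : (k < n)%nat -> k <> j -> inT n V j k = true ->
  exists i, In i (children n V j) /\ inT n V i k = true.
Proof.
  intros Hk Hne H. apply inT_iff in H as [[|m] Hm]; auto.
  - simpl in Hm. congruence.
  - simpl in Hm. destruct (anc_iter n V k m) as [i|] eqn:Ei; [|discriminate].
    exists i. split.
    + apply children_In. split; auto. apply parent_lt in Hm. lia.
    + apply inT_iff; eauto.
Qed.

Lemma inT_child_unique j k i1 i2 : (k < n)%nat ->
  parent n V i1 = Some j -> parent n V i2 = Some j ->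
  inT n V i1 k = true -> inT n V i2 k = true -> i1 = i2.
Proof.
  intros Hk Hp1 Hp2 H1 H2.
  apply inT_iff in H1 as [m1 Hm1]; apply inT_iff in H2 as [m2 Hm2]; auto.
  assert (Hj1 : anc_iter n V k (S m1) = Some j) by (simpl; rewrite Hm1; exact Hp1).
  assert (Hj2 : anc_iter n V k (S m2) = Some j) by (simpl; rewrite Hm2; exact Hp2).
  pose proof (anc_inj _ _ _ _ Hj1 Hj2) as Hm. injection Hm as ->. congruence.
Qed.

Definition ind (b : bool) : R := if b then 1 else 0.

Lemma inT_decomp j k : (j < n)%nat -> (k < n)%nat ->
  ind (inT n V j k) = ind (Nat.eqb k j) + rsum (children n V j) (fun i => ind (inT n V i k)).
Proof.
  intros Hj Hk. destruct (Nat.eqb_spec k j) as [->|Hne].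
  - rewrite inT_refl by auto. rewrite rsum_zero; [unfold ind; lra|].
    intros i Hi. apply children_In in Hi as [_ Hp]. apply parent_lt in Hp.
    unfold ind. destruct (inT n V i j) eqn:E; auto. apply inT_le in E; auto. lia.
  - destruct (inT n V j k) eqn:E.
    + destruct (inT_through_child j k Hk Hne E) as [i0 [Hi0 Hi0k]].
      rewrite (rsum_ext _ _ (fun i => if Nat.eqb i0 i then 1 else 0)).
      * rewrite rsum_delta_in by auto using children_NoDup. unfold ind; lra.
      * intros i Hi. unfold ind. destruct (Nat.eqb_spec i0 i) as [<-|Hne'].
        -- rewrite Hi0k; reflexivity.
        -- destruct (inT n V i k) eqn:Eik; auto. exfalso. apply Hne'.
           apply children_In in Hi as [_ Hi]; apply children_In in Hi0 as [_ Hi0].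
           eapply inT_child_unique; eauto.
    + rewrite rsum_zero; [unfold ind; lra|].
      intros i Hi. apply children_In in Hi as [_ Hp]. unfold ind.
      destruct (inT n V i k) eqn:Eik; auto.
      rewrite (inT_parent i j k) in E by auto. discriminate.
Qed.

Lemma Tset_sum j g : (j < n)%nat ->
  rsum (Tset n V j) g = g j + rsum (children n V j) (fun i => rsum (Tset n V i) g).
Proof.
  intros Hj. unfold Tset. rewrite rsum_filter.
  rewrite (rsum_ext _ _ (fun x => ind (Nat.eqb x j) * g x
      + rsum (children n V j) (fun i => ind (inT n V i x) * g x))).
  2:{ intros x Hx. apply in_seq in Hx.
      rewrite (rsum_scalr _ (g x) (fun i => ind (inT n V i x))), <- Rmult_plus_distr_r,
        <- inT_decomp by lia. unfold ind; destruct inT; lra. }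
  rewrite rsum_plus. f_equal.
  - rewrite (rsum_ext _ _ (fun x => if Nat.eqb j x then g x else 0)).
    + apply rsum_delta_in; [apply seq_NoDup|apply in_seq; lia].
    + intros x _. unfold ind. rewrite Nat.eqb_sym. destruct (Nat.eqb j x); lra.
  - rewrite rsum_swap. apply rsum_ext. intros i _. rewrite rsum_filter.
    apply rsum_ext. intros x _. unfold ind; destruct inT; lra.
Qed.

Lemma Tset_le i k : (i < n)%nat -> In k (Tset n V i) -> (k <= i)%nat.
Proof.
  intros Hi Hk. unfold Tset in Hk. apply filter_In in Hk as [Hk Ht].
  apply in_seq in Hk. apply inT_le in Ht; lia.
Qed.

(* Filledness propagates the rows of a column k to every ancestor of k. *)
Lemma anc_pattern k m i p : anc_iter n V k m = Some i -> (i < p)%nat -> V p k = true ->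
  V p i = true.
Proof.
  revert k; induction m as [|m IH]; intros k H Hip Hpk.
  - simpl in H. inversion H; subst; auto.
  - rewrite anc_S in H. destruct (parent n V k) as [k1|] eqn:Ep; [|discriminate].
    pose proof (anc_ge _ _ _ H) as Hge.
    destruct (parent_spec _ _ Ep) as [Hin Hmin]. apply Iset_In in Hin.
    pose proof (proj1 HV p k Hpk) as Hpn.
    assert (Hp : In p (Iset n V k)) by (apply Iset_In; split; auto; lia).
    specialize (Hmin p Hp).
    apply (IH k1); auto. apply (Hfill p k1 k); try lia; tauto.
Qed.

Lemma Tset_pattern i k p : In k (Tset n V i) -> (i < p)%nat -> V p k = true ->
  V p i = true.
Proof.
  intros Hk. unfold Tset in Hk. apply filter_In in Hk as [Hk Ht].
  apply in_seq in Hk. apply inT_iff in Ht as [m Hm]; [|lia]. eapply anc_pattern; eauto.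
Qed.

Lemma pattern_anc d : forall k j, (j - k <= d)%nat -> (k < j)%nat -> V j k = true ->
  exists m, anc_iter n V k m = Some j.
Proof.
  induction d as [|d IH]; intros k j Hd Hkj Hjk; [lia|].
  pose proof (proj1 HV j k Hjk) as Hjn.
  assert (Hin : In j (Iset n V k)) by (apply Iset_In; split; auto; lia).
  destruct (parent_exists _ _ Hin) as [k1 Ep].
  destruct (parent_spec _ _ Ep) as [Hk1 Hmin]. specialize (Hmin j Hin).
  apply Iset_In in Hk1.
  destruct (Nat.eq_dec k1 j) as [->|Hne].
  - exists 1%nat. rewrite anc_S, Ep. reflexivity.
  - destruct (IH k1 j) as [m Hm]; try lia.
    + apply (Hfill j k1 k); try lia; tauto.
    + exists (S m). rewrite anc_S, Ep. exact Hm.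
Qed.

Lemma pattern_Tset j k : (k < j)%nat -> V j k = true -> In k (Tset n V j).
Proof.
  intros H1 H2. pose proof (proj1 HV j k H2) as Hjn.
  unfold Tset. apply filter_In. split; [apply in_seq; lia|].
  apply inT_iff; [lia|]. eapply (pattern_anc (j - k)); eauto.
Qed.

End EliminationTree.

(** * The frontal identity for a single factorization *)

Definition ldl_factorization (n : nat) (Z Lm Dm : mat) : Prop :=
  (forall i j, (i < n)%nat -> (j < n)%nat ->
     Z i j = rsum (seq 0 n) (fun k => Lm i k * Dm k k * Lm j k)) /\
  (forall i, (i < n)%nat -> Lm i i = 1) /\
  (forall i j, (i < j < n)%nat -> Lm i j = 0) /\
  (forall i j, (i < n)%nat -> (j < n)%nat -> i <> j -> Dm i j = 0) /\
  (forall i, (i < n)%nat -> Dm i i > 0).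

Definition subtree_gram (n : nat) (V : nat -> nat -> bool) (Lm Dm : mat)
    (i p q : nat) : R :=
  rsum (Tset n V i) (fun k => Dm k k * Lm p k * Lm q k).

(* The update matrix U_i, indexed by positions in I_i; [Umat n V L D i t] is
   [update_matrix n V (L t) (D t) i] by definition. *)
Definition update_matrix (n : nat) (V : nat -> nat -> bool) (Lm Dm : mat)
    (i a b : nat) : R :=
  - subtree_gram n V Lm Dm i (nth a (Iset n V i) 0%nat) (nth b (Iset n V i) 0%nat).

Definition extend_add (n : nat) (V : nat -> nat -> bool)
    (U : nat -> nat -> nat -> R) (j a b : nat) : R :=
  rsum (children n V j) (fun i =>
    rsum (seq 0 (length (Iset n V i))) (fun c =>
      rsum (seq 0 (length (Iset n V i))) (fun d =>
        Emat (Iplus n V j) (Iset n V i) a c * U i c d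
        * Emat (Iplus n V j) (Iset n V i) b d))).

Definition frontal_col (n : nat) (V : nat -> nat -> bool) (M : mat) (top : R)
    (j a : nat) : R :=
  match a with O => top | S a' => M (nth a' (Iset n V j) 0%nat) j end.

Definition lower_block (Uj : nat -> nat -> R) (a b : nat) : R :=
  match a, b with S a', S b' => Uj a' b' | _, _ => 0 end.

Section Factorization.
Variable n : nat.
Variable V : nat -> nat -> bool.
Hypothesis HV : sparsity_pattern n V.
Hypothesis Hfill : filled n V.
Variables Z Lm Dm : mat.
Hypothesis HZpat : forall i j, (j <= i < n)%nat -> V i j = false -> Z i j = 0.
Hypothesis Hldl : ldl_factorization n Z Lm Dm.

(* Entry (i,k), k <= i, of Z = L D L^T: the columns m > k of L do not contribute. *)
Lemma ldl_entry i k : (k <= i < n)%nat ->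
  Z i k = rsum (seq 0 k) (fun m => Lm i m * Dm m m * Lm k m) + Lm i k * Dm k k.
Proof.
  destruct Hldl as (Hprod & Hdiag & Hupper & _). intros H. rewrite Hprod by lia.
  replace n with (k + (1 + (n - k - 1)))%nat at 1 by lia.
  rewrite seq_app, seq_app, rsum_app, rsum_app. simpl.
  rewrite (rsum_zero (seq (k + 1) _)).
  - rewrite Hdiag by lia. lra.
  - intros x Hx. apply in_seq in Hx. rewrite (Hupper k x) by lia. lra.
Qed.

Lemma ldl_no_fill k i : (k < i < n)%nat -> V i k = false -> Lm i k = 0.
Proof.
  revert i. induction k as [k IH] using lt_wf_ind; intros i Hki Hv.
  pose proof (ldl_entry i k ltac:(lia)) as E.
  rewrite HZpat in E by (auto; lia). rewrite rsum_zero in E.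
  - pose proof (proj2 (proj2 (proj2 (proj2 Hldl))) k ltac:(lia)).
    assert (Hprod : Lm i k * Dm k k = 0) by lra.
    apply Rmult_integral in Hprod as [|]; auto. lra.
  - intros m Hm. apply in_seq in Hm.
    destruct (V i m) eqn:Vim; [destruct (V k m) eqn:Vkm|].
    + assert (V i k = true) by (apply (Hfill i k m); auto; lia). congruence.
    + rewrite (IH m ltac:(lia) k) by (auto; lia). lra.
    + rewrite (IH m ltac:(lia) i) by (auto; lia). lra.
Qed.

Lemma ldl_column_subtree j p : (j <= p < n)%nat ->
  Z p j = subtree_gram n V Lm Dm j j p.
Proof.
  destruct Hldl as (Hprod & _ & Hupper & _). intros H.
  rewrite Hprod by lia. unfold subtree_gram, Tset. rewrite rsum_filter.
  apply rsum_ext. intros k Hk. apply in_seq in Hk.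
  destruct (inT n V j k) eqn:E; [lra|].
  assert (Hjk : Lm j k = 0).
  { destruct (Nat.lt_total j k) as [h|[<-|h]].
    - apply Hupper; lia.
    - rewrite inT_refl in E by lia. discriminate.
    - destruct (V j k) eqn:Vjk.
      + pose proof (pattern_Tset n V HV Hfill j k h Vjk) as HT.
        unfold Tset in HT. apply filter_In in HT as [_ HT]. congruence.
      + apply ldl_no_fill; auto; lia. }
  rewrite Hjk. lra.
Qed.

Lemma ldl_zero_outside_child j i p k : (i < n)%nat -> parent n V i = Some j ->
  (j <= p < n)%nat -> ~ In p (Iset n V i) -> In k (Tset n V i) -> Lm p k = 0.
Proof.
  intros Hi Hp Hjp Hnot Hk. apply parent_lt in Hp; auto.
  pose proof (Tset_le n V i k Hi Hk).
  destruct (V p k) eqn:Vpk.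
  - exfalso. apply Hnot, Iset_In. split; [lia|]. eapply Tset_pattern; eauto. lia.
  - apply ldl_no_fill; auto; lia.
Qed.

Lemma nth_Iplus_range j a : (j < n)%nat -> (a < length (Iplus n V j))%nat ->
  (j <= nth a (Iplus n V j) 0%nat < n)%nat.
Proof.
  intros Hj Ha. destruct a as [|a]; simpl in *; [lia|].
  pose proof (nth_Iset_In n V j a ltac:(lia)). lia.
Qed.

Lemma extend_add_gram j a b : (j < n)%nat ->
  (a < length (Iplus n V j))%nat -> (b < length (Iplus n V j))%nat ->
  let p := nth a (Iplus n V j) 0%nat in let q := nth b (Iplus n V j) 0%nat in
  extend_add n V (update_matrix n V Lm Dm) j a b
  = Dm j j * Lm p j * Lm q j - subtree_gram n V Lm Dm j p q.
Proof.
  intros Hj Ha Hb p q.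
  assert (Hsplit : subtree_gram n V Lm Dm j p q = Dm j j * Lm p j * Lm q j
            + rsum (children n V j) (fun i => subtree_gram n V Lm Dm i p q))
    by (unfold subtree_gram; apply Tset_sum; auto).
  rewrite Hsplit.
  replace (_ - _) with (- rsum (children n V j) (fun i => subtree_gram n V Lm Dm i p q))
    by lra.
  rewrite <- rsum_opp.
  unfold extend_add. apply rsum_ext. intros i Hi.
  apply children_In in Hi as [Hi Hpar].
  apply (Emat_sandwich (Iplus n V j) (Iset n V i) a b
           (fun p q => - subtree_gram n V Lm Dm i p q)); [apply Iset_NoDup|].
  intros Hout. unfold subtree_gram. rewrite rsum_zero; [lra|]. intros k Hk.
  pose proof (nth_Iplus_range j a Hj Ha). pose proof (nth_Iplus_range j b Hj Hb).
  destruct Hout as [Hout|Hout].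
  - rewrite (ldl_zero_outside_child j i (nth a (Iplus n V j) 0%nat) k) by auto. lra.
  - rewrite (ldl_zero_outside_child j i (nth b (Iplus n V j) 0%nat) k) by auto. lra.
Qed.

Lemma frontal_identity j a b : (j < n)%nat ->
  (a < length (Iplus n V j))%nat -> (b < length (Iplus n V j))%nat ->
  Yblock n V Z j a b + extend_add n V (update_matrix n V Lm Dm) j a b
  = frontal_col n V Lm 1 j a * frontal_col n V Lm 1 j b * Dm j j
    + lower_block (update_matrix n V Lm Dm j) a b.
Proof.
  intros Hj Ha Hb. rewrite extend_add_gram by auto.
  pose proof (proj1 (proj2 Hldl) j Hj) as Hjj.
  destruct a as [|a]; destruct b as [|b]; simpl in Ha, Hb |- *.
  - rewrite (ldl_column_subtree j j), Hjj by lia. lra.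
  - pose proof (nth_Iset_In n V j b ltac:(lia)).
    rewrite (ldl_column_subtree j), Hjj by lia. lra.
  - pose proof (nth_Iset_In n V j a ltac:(lia)).
    rewrite (ldl_column_subtree j), Hjj by lia. unfold subtree_gram.
    rewrite (rsum_ext _ (fun k => Dm k k * Lm j k * Lm _ k)
       (fun k => Dm k k * Lm (nth a (Iset n V j) 0%nat) k * Lm j k)) by (intros; lra).
    lra.
  - unfold update_matrix. lra.
Qed.

End Factorization.

(** * Differentiation rules on R with the usual operations *)

(* Coquelicot states these rules over an abstract normed module; the instances
   below are phrased with the operations of R so that they match our goals. *)
Section DerivativeRules.
Variable x : R.

Lemma is_derive_plus_R (f g : R -> R) df dg : is_derive f x df -> is_derive g x dg ->
  is_derive (fun t => f t + g t) x (df + dg).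
Proof. intros; apply (is_derive_plus f g x df dg); auto. Qed.

Lemma is_derive_mult_R (f g : R -> R) df dg : is_derive f x df -> is_derive g x dg ->
  is_derive (fun t => f t * g t) x (df * g x + f x * dg).
Proof. intros; apply (is_derive_mult f g x df dg); auto. intros; apply Rmult_comm. Qed.

Lemma is_derive_const_R (c : R) : is_derive (fun _ => c) x 0.
Proof. apply (is_derive_const c x). Qed.

Lemma is_derive_value (f : R -> R) (d1 d2 : R) : is_derive f x d1 -> d1 = d2 -> is_derive f x d2.
Proof. intros H <-; exact H. Qed.

Lemma is_derive_affine (a b : R) : is_derive (fun t => a + t * b) x b.
Proof.
  apply (is_derive_value _ (0 + (1 * b + x * 0))); [|ring].
  apply is_derive_plus_R; [apply is_derive_const_R|].
  apply (is_derive_mult_R (fun t => t) (fun _ => b));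
    [apply (is_derive_id x)|apply is_derive_const_R].
Qed.

Lemma is_derive_sandwich (c1 c2 : R) (g : R -> R) (dg : R) : is_derive g x dg ->
  is_derive (fun t => c1 * g t * c2) x (c1 * dg * c2).
Proof.
  intros H. apply (is_derive_value _ ((0 * g x + c1 * dg) * c2 + c1 * g x * 0)); [|ring].
  apply (is_derive_mult_R (fun t => c1 * g t) (fun _ => c2)); [|apply is_derive_const_R].
  apply (is_derive_mult_R (fun _ => c1) g); [apply is_derive_const_R|exact H].
Qed.

Lemma is_derive_rsum l (f : nat -> R -> R) (df : nat -> R) :
  (forall k, In k l -> is_derive (f k) x (df k)) ->
  is_derive (fun t => rsum l (fun k => f k t)) x (rsum l df).
Proof.
  induction l as [|a l IH]; intros H.
  - change (is_derive (fun _ : R => 0) x 0). apply is_derive_const_R.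
  - change (is_derive (fun t => f a t + rsum l (fun k => f k t)) x (df a + rsum l df)).
    apply (is_derive_plus_R (f a) (fun t => rsum l (fun k => f k t))).
    + apply H; left; auto.
    + apply IH; intros; apply H; right; auto.
Qed.

Lemma ex_derive_rsum l (f : nat -> R -> R) : (forall k, In k l -> ex_derive (f k) x) ->
  ex_derive (fun t => rsum l (fun k => f k t)) x.
Proof.
  intros H. eexists. apply is_derive_rsum. intros k Hk. apply Derive_correct, H, Hk.
Qed.

Lemma ex_derive_minus_R (f g : R -> R) : ex_derive f x -> ex_derive g x ->
  ex_derive (fun t => f t - g t) x.
Proof. apply (ex_derive_minus f g x). Qed.

Lemma ex_derive_opp_R (f : R -> R) : ex_derive f x -> ex_derive (fun t => - f t) x.
Proof. apply (ex_derive_opp f x). Qed.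

Lemma ex_derive_affine (a b : R) : ex_derive (fun t => a + t * b) x.
Proof. eexists; apply is_derive_affine. Qed.

End DerivativeRules.

(** * Expansion of the block product [1 0; L I] M [1 L^T; 0 I] *)

Lemma Lblock_row n V L0 j a (h : nat -> R) : (a < length (Iplus n V j))%nat ->
  rsum (seq 0 (length (Iplus n V j))) (fun c => Lblock n V L0 j a c * h c)
  = frontal_col n V L0 1 j a * h 0%nat + match a with O => 0 | S _ => h a end.
Proof.
  intros Ha. simpl length in *.
  change (seq 0 (S (length (Iset n V j)))) with (0%nat :: seq 1 (length (Iset n V j))).
  rewrite <- seq_shift.
  change (Lblock n V L0 j a 0 * h 0%nat + rsum (map S (seq 0 (length (Iset n V j))))
      (fun c => Lblock n V L0 j a c * h c)
      = frontal_col n V L0 1 j a * h 0%nat + match a with O => 0 | S _ => h a end).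
  replace (Lblock n V L0 j a 0) with (frontal_col n V L0 1 j a) by (destruct a; reflexivity).
  f_equal. rewrite rsum_map. destruct a as [|a].
  - apply rsum_zero. intros; simpl; lra.
  - rewrite (rsum_ext _ _ (fun c => if Nat.eqb a c then h (S c) else 0)).
    + apply (rsum_delta_in _ a (fun c => h (S c))); [apply seq_NoDup|apply in_seq; lia].
    + intros c _. simpl. destruct (Nat.eqb a c); lra.
Qed.

Lemma frontal_block_product n V (L0 D0 Dp Lp : mat) (Upj : nat -> nat -> R) j a b :
  (a < length (Iplus n V j))%nat -> (b < length (Iplus n V j))%nat ->
  rsum (seq 0 (length (Iplus n V j))) (fun c =>
    rsum (seq 0 (length (Iplus n V j))) (fun d =>
      Lblock n V L0 j a c * Mblock n V D0 Dp Lp Upj j c d * Lblock n V L0 j b d))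
  = (frontal_col n V Lp 0 j a * frontal_col n V L0 1 j b
     + frontal_col n V L0 1 j a * frontal_col n V Lp 0 j b) * D0 j j
    + frontal_col n V L0 1 j a * frontal_col n V L0 1 j b * Dp j j
    + lower_block Upj a b.
Proof.
  intros Ha Hb.
  rewrite (rsum_ext _ _ (fun c => Lblock n V L0 j a c *
      rsum (seq 0 (length (Iplus n V j))) (fun d =>
        Lblock n V L0 j b d * Mblock n V D0 Dp Lp Upj j c d))).
  2:{ intros c _. rewrite <- rsum_scal. apply rsum_ext. intros d _. lra. }
  rewrite (rsum_ext _ _ (fun c => Lblock n V L0 j a c *
      (frontal_col n V L0 1 j b * Mblock n V D0 Dp Lp Upj j c 0%nat
       + match b with O => 0 | S _ => Mblock n V D0 Dp Lp Upj j c b end))).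
  2:{ intros c _. rewrite Lblock_row by auto. reflexivity. }
  rewrite Lblock_row by auto.
  destruct a as [|a]; destruct b as [|b]; simpl; lra.
Qed.

(** * Differentiability of the factors at t = 0 *)

Section Differentiability.
Variable n : nat.
Variables X Y : mat.
Variables L D : R -> mat.
Variable delta : R.
Hypothesis Hdelta : delta > 0.
Hypothesis Hfact : forall t, Rabs t < delta ->
  ldl_factorization n (fun i j => X i j + t * Y i j) (L t) (D t).

Lemma near_zero (P : R -> Prop) : (forall t, Rabs t < delta -> P t) -> locally 0 P.
Proof.
  intros H. exists (mkposreal delta Hdelta). intros t Ht. apply H.
  change (Rabs (t - 0) < delta) in Ht. rewrite Rminus_0_r in Ht. exact Ht.
Qed.

(* Induction on the columns: D_kk = Z_kk - sum_(m<k) L_km D_mm L_km and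
   L_ik = (Z_ik - sum_(m<k) L_im D_mm L_km) / D_kk for i > k. *)
Lemma ldl_column_differentiable k : (k < n)%nat ->
  (forall i, (i < n)%nat -> ex_derive (fun t => L t i k) 0) /\ ex_derive (fun t => D t k k) 0.
Proof.
  induction k as [k IH] using lt_wf_ind; intros Hk.
  assert (Hpartial : forall i, (i < n)%nat ->
     ex_derive (fun t => rsum (seq 0 k) (fun m => L t i m * D t m m * L t k m)) 0).
  { intros i Hi. apply ex_derive_rsum. intros m Hm. apply in_seq in Hm.
    destruct (IH m ltac:(lia) ltac:(lia)) as [HL HD].
    apply ex_derive_mult; [apply ex_derive_mult|]; auto. }
  assert (HDk : ex_derive (fun t => D t k k) 0).
  { apply (ex_derive_ext_loc (fun t => (X k k + t * Y k k)
             - rsum (seq 0 k) (fun m => L t k m * D t m m * L t k m))).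
    - apply near_zero. intros t Ht.
      rewrite (ldl_entry n _ _ _ (Hfact t Ht) k k) by lia.
      rewrite (proj1 (proj2 (Hfact t Ht)) k Hk). lra.
    - apply ex_derive_minus_R; [apply ex_derive_affine|auto]. }
  split; [|exact HDk]. intros i Hi.
  destruct (Nat.lt_total k i) as [Hki|[<-|Hik]].
  - apply (ex_derive_ext_loc (fun t => ((X i k + t * Y i k)
             - rsum (seq 0 k) (fun m => L t i m * D t m m * L t k m)) / D t k k)).
    + apply near_zero. intros t Ht.
      rewrite (ldl_entry n _ _ _ (Hfact t Ht) i k) by lia.
      pose proof (proj2 (proj2 (proj2 (proj2 (Hfact t Ht)))) k Hk).
      match goal with |- ?u = ?v => change (@eq R u v) end. field. lra.
    + pose proof (proj2 (proj2 (proj2 (proj2 (Hfact 0 ltac:(rewrite Rabs_R0; lra)))))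
                    k Hk).
      apply ex_derive_div; [apply ex_derive_minus_R; [apply ex_derive_affine|auto]|auto|lra].
  - apply (ex_derive_ext_loc (fun _ => 1)); [|apply ex_derive_const].
    apply near_zero. intros t Ht. symmetry. exact (proj1 (proj2 (Hfact t Ht)) k Hk).
  - apply (ex_derive_ext_loc (fun _ => 0)); [|apply ex_derive_const].
    apply near_zero. intros t Ht. symmetry. apply (proj1 (proj2 (proj2 (Hfact t Ht)))). lia.
Qed.

Lemma L_differentiable i j : (i < n)%nat -> (j < n)%nat ->
  ex_derive (fun t => L t i j) 0.
Proof. intros Hi Hj. exact (proj1 (ldl_column_differentiable j Hj) i Hi). Qed.

Lemma D_differentiable i j : (i < n)%nat -> (j < n)%nat ->
  ex_derive (fun t => D t i j) 0.
Proof.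
  intros Hi Hj. destruct (Nat.eq_dec i j) as [<-|Hne].
  - exact (proj2 (ldl_column_differentiable i Hi)).
  - apply (ex_derive_ext_loc (fun _ => 0)); [|apply ex_derive_const].
    apply near_zero. intros t Ht. symmetry.
    apply (proj1 (proj2 (proj2 (proj2 (Hfact t Ht))))); auto.
Qed.

Variable V : nat -> nat -> bool.

Lemma U_differentiable i a b : (a < length (Iset n V i))%nat ->
  (b < length (Iset n V i))%nat ->
  ex_derive (fun t => update_matrix n V (L t) (D t) i a b) 0.
Proof.
  intros Ha Hb. unfold update_matrix, subtree_gram.
  apply (ex_derive_opp_R 0 (fun t => rsum (Tset n V i) (fun k =>
    D t k k * L t (nth a (Iset n V i) 0%nat) k * L t (nth b (Iset n V i) 0%nat) k))).
  apply (ex_derive_rsum 0 (Tset n V i) (fun k t =>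
    D t k k * L t (nth a (Iset n V i) 0%nat) k * L t (nth b (Iset n V i) 0%nat) k)).
  intros k Hk. unfold Tset in Hk. apply filter_In in Hk as [Hk _]. apply in_seq in Hk.
  pose proof (nth_Iset_In n V i a Ha). pose proof (nth_Iset_In n V i b Hb).
  apply ex_derive_mult; [apply ex_derive_mult|].
  - apply D_differentiable; lia.
  - apply L_differentiable; lia.
  - apply L_differentiable; lia.
Qed.

Lemma frontal_col_derivative j a : (j < n)%nat -> (a < length (Iplus n V j))%nat ->
  is_derive (fun t => frontal_col n V (L t) 1 j a) 0
    (frontal_col n V (fun p q => Derive (fun t => L t p q) 0) 0 j a).
Proof.
  intros Hj Ha. destruct a as [|a]; simpl in Ha |- *.
  - apply is_derive_const_R.
  - apply Derive_correct, L_differentiable; [|exact Hj].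
    apply (nth_Iset_In n V j a). lia.
Qed.

End Differentiability.

(** * Differentiating the frontal identity *)

Section DifferentiatedIdentity.
Variable n : nat.
Variable V : nat -> nat -> bool.
Variables X Y : mat.
Variables L D : R -> mat.
Variable delta : R.
Hypothesis HV : sparsity_pattern n V.
Hypothesis Hfill : filled n V.
Hypothesis HX : in_SV n V X.
Hypothesis HY : in_SV n V Y.
Hypothesis Hdelta : delta > 0.
Hypothesis Hfact : forall t, Rabs t < delta ->
  ldl_factorization n (fun i j => X i j + t * Y i j) (L t) (D t).

Let Lp : mat := fun p q => Derive (fun t => L t p q) 0.
Let Dp : mat := fun p q => Derive (fun t => D t p q) 0.
Let Up (i a b : nat) : R := Derive (fun t => update_matrix n V (L t) (D t) i a b) 0.

Lemma perturbed_pattern t i j : (j <= i < n)%nat -> V i j = false ->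
  X i j + t * Y i j = 0.
Proof.
  intros H Hv. rewrite (proj1 (proj2 HX i j H Hv)), (proj1 (proj2 HY i j H Hv)). ring.
Qed.

Lemma frontal_lhs_derivative j a b : (j < n)%nat ->
  is_derive (fun t => Yblock n V (fun p q => X p q + t * Y p q) j a b
                      + extend_add n V (update_matrix n V (L t) (D t)) j a b) 0
    (Yblock n V Y j a b + extend_add n V Up j a b).
Proof.
  intros Hj. apply is_derive_plus_R.
  - destruct a as [|a]; destruct b as [|b]; cbv beta iota delta [Yblock];
      [apply is_derive_affine .. | apply is_derive_const_R].
  - unfold extend_add. apply is_derive_rsum. intros i Hi.
    apply is_derive_rsum. intros c Hc. apply in_seq in Hc.
    apply is_derive_rsum. intros d Hd. apply in_seq in Hd.
    apply is_derive_sandwich, Derive_correct, (U_differentiable n X Y L D delta Hdelta Hfact); lia.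
Qed.

Lemma frontal_rhs_derivative j a b : (j < n)%nat ->
  (a < length (Iplus n V j))%nat -> (b < length (Iplus n V j))%nat ->
  is_derive (fun t => frontal_col n V (L t) 1 j a * frontal_col n V (L t) 1 j b * D t j j
                      + lower_block (update_matrix n V (L t) (D t) j) a b) 0
    ((frontal_col n V Lp 0 j a * frontal_col n V (L 0) 1 j b
      + frontal_col n V (L 0) 1 j a * frontal_col n V Lp 0 j b) * D 0 j j
     + frontal_col n V (L 0) 1 j a * frontal_col n V (L 0) 1 j b * Dp j j
     + lower_block (Up j) a b).
Proof.
  intros Hj Ha Hb.
  pose proof (frontal_col_derivative n X Y L D delta Hdelta Hfact V j a Hj Ha).
  pose proof (frontal_col_derivative n X Y L D delta Hdelta Hfact V j b Hj Hb).
  apply is_derive_plus_R.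
  - apply (is_derive_mult_R 0 (fun t => frontal_col n V (L t) 1 j a * frontal_col n V (L t) 1 j b)
             (fun t => D t j j)).
    + apply (is_derive_mult_R 0 (fun t => frontal_col n V (L t) 1 j a)); assumption.
    + apply Derive_correct, (D_differentiable n X Y L D delta Hdelta Hfact); exact Hj.
  - destruct a as [|a]; destruct b as [|b]; simpl in Ha, Hb |- *;
      [apply is_derive_const_R ..|].
    apply Derive_correct, (U_differentiable n X Y L D delta Hdelta Hfact); lia.
Qed.

(* Both sides agree near 0 by the frontal identity, so their derivatives agree. *)
Lemma differentiated_frontal_identity j a b : (j < n)%nat ->
  (a < length (Iplus n V j))%nat -> (b < length (Iplus n V j))%nat ->
  Yblock n V Y j a b + extend_add n V Up j a b
  = (frontal_col n V Lp 0 j a * frontal_col n V (L 0) 1 j b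
     + frontal_col n V (L 0) 1 j a * frontal_col n V Lp 0 j b) * D 0 j j
    + frontal_col n V (L 0) 1 j a * frontal_col n V (L 0) 1 j b * Dp j j
    + lower_block (Up j) a b.
Proof.
  intros Hj Ha Hb.
  pose proof (frontal_lhs_derivative j a b Hj) as Hlhs.
  pose proof (frontal_rhs_derivative j a b Hj Ha Hb) as Hrhs.
  apply is_derive_unique in Hlhs. rewrite <- Hlhs.
  apply is_derive_unique. refine (is_derive_ext_loc _ _ 0 _ _ Hrhs).
  apply (near_zero delta Hdelta). intros t Ht. symmetry.
  apply (frontal_identity n V HV Hfill); auto.
  intros i k Hik Hv. apply perturbed_pattern; auto.
Qed.

End DifferentiatedIdentity.

Theorem mainTheorem5 (n : nat) (V : nat -> nat -> bool) (X Y : mat)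
  (L D : R -> mat)
  (HV : sparsity_pattern n V) (Hfill : filled n V)
  (HX : in_SV n V X) (HXpd : pos_def n X) (HY : in_SV n V Y)
  (Hfact : exists delta, delta > 0 /\ forall t, Rabs t < delta ->
     (forall i j, (i < n)%nat -> (j < n)%nat ->
        X i j + t * Y i j = rsum (seq 0 n) (fun k => L t i k * D t k k * L t j k)) /\
     (forall i, (i < n)%nat -> L t i i = 1) /\
     (forall i j, (i < j < n)%nat -> L t i j = 0) /\
     (forall i j, (i < n)%nat -> (j < n)%nat -> i <> j -> D t i j = 0) /\
     (forall i, (i < n)%nat -> D t i i > 0)) :
  exists (Lp Dp : mat) (Up : nat -> nat -> nat -> R),
    (forall i j, (i < n)%nat -> (j < n)%nat ->
       derivable_pt_lim (fun t => L t i j) 0 (Lp i j)) /\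
    (forall i j, (i < n)%nat -> (j < n)%nat ->
       derivable_pt_lim (fun t => D t i j) 0 (Dp i j)) /\
    (forall i a b, (i < n)%nat -> (a < length (Iset n V i))%nat ->
       (b < length (Iset n V i))%nat ->
       derivable_pt_lim (fun t => Umat n V L D i t a b) 0 (Up i a b)) /\
    (forall j, (j < n)%nat ->
     forall a b, (a < length (Iplus n V j))%nat -> (b < length (Iplus n V j))%nat ->
       Yblock n V Y j a b
       + rsum (children n V j) (fun i =>
           rsum (seq 0 (length (Iset n V i))) (fun c =>
             rsum (seq 0 (length (Iset n V i))) (fun d =>
               Emat (Iplus n V j) (Iset n V i) a c * Up i c d
               * Emat (Iplus n V j) (Iset n V i) b d)))
       = rsum (seq 0 (length (Iplus n V j))) (fun c =>
           rsum (seq 0 (length (Iplus n V j))) (fun d =>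
             Lblock n V (L 0) j a c * Mblock n V (D 0) Dp Lp (Up j) j c d
             * Lblock n V (L 0) j b d))).
Proof.
  destruct Hfact as [delta [Hdelta Hldl]].
  exists (fun i j => Derive (fun t => L t i j) 0), (fun i j => Derive (fun t => D t i j) 0),
    (fun i a b => Derive (fun t => Umat n V L D i t a b) 0).
  split; [|split; [|split]].
  - intros i j Hi Hj. apply is_derive_Reals, Derive_correct.
    exact (L_differentiable n X Y L D delta Hdelta Hldl i j Hi Hj).
  - intros i j Hi Hj. apply is_derive_Reals, Derive_correct.
    exact (D_differentiable n X Y L D delta Hdelta Hldl i j Hi Hj).
  - intros i a b _ Ha Hb. apply is_derive_Reals, Derive_correct.
    exact (U_differentiable n X Y L D delta Hdelta Hldl V i a b Ha Hb).
  - intros j Hj a b Ha Hb. rewrite frontal_block_product by assumption.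
    exact (differentiated_frontal_identity n V X Y L D delta HV Hfill HX HY Hdelta Hldl
             j a b Hj Ha Hb).
Qed.
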